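(* Let $\Omega_1,\Omega_2\subset\mathbb{R}^n$ be nearly convex sets with $\operatorname{ri}\Omega_1\cap\operatorname{ri}\Omega_2\neq\emptyset$. Then $\sigma_{\Omega_1\cap\Omega_2}=\sigma_{\Omega_1}\,\square\,\sigma_{\Omega_2}$. Moreover, for every $v\in\mathbb{R}^n$ with $\sigma_{\Omega_1\cap\Omega_2}(v)\in\mathbb{R}$ there exist $v_1,v_2\in\mathbb{R}^n$ with $v=v_1+v_2$ and $\sigma_{\Omega_1\cap\Omega_2}(v)=\sigma_{\Omega_1}(v_1)+\sigma_{\Omega_2}(v_2)$.
   Context: A set $\Omega$ is nearly convex if there is a convex set $C$ with $C\subset\Omega\subset\overline{C}$; $\operatorname{ri}\Omega=\{a\in\Omega:\exists\delta>0,\ B(a;\delta)\cap\operatorname{aff}\Omega\subset\Omega\}$. Support function: $\sigma_\Omega(v)=\sup\{\langle v,x\rangle:x\in\Omega\}$. Infimal convolution: $(g\square h)(x)=\inf\{g(x_1)+h(x_2):x_1+x_2=x\}$. *)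

From HB Require Import structures.
From mathcomp Require Import all_boot all_order all_algebra.
From mathcomp Require Import all_classical all_reals all_analysis.
Set Implicit Arguments. Unset Strict Implicit. Unset Printing Implicit Defensive.
Import Order.TTheory GRing.Theory Num.Theory.
Local Open Scope classical_set_scope.
Local Open Scope ring_scope.

Section Defs.
Variables (R : realType) (n : nat).
Implicit Types (x y v a : 'rV[R]_n) (C Omega : set 'rV[R]_n).

Definition dotp (u v : 'rV[R]_n) : R := \sum_(i < n) u 0 i * v 0 i.

Definition eball a (delta : R) : set 'rV[R]_n :=
  [set x | Num.sqrt (dotp (x - a) (x - a)) < delta].

Definition convex_set_def C : Prop :=
  forall x y (t : R), C x -> C y -> 0 <= t <= 1 ->
    C (t *: x + (1 - t) *: y).

Definition eclosure C : set 'rV[R]_n :=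
  [set x | forall eps : R, 0 < eps -> exists c, C c /\ eball x eps c].

Definition nearly_convex Omega : Prop :=
  exists C, convex_set_def C /\ C `<=` Omega /\ Omega `<=` eclosure C.

Definition aff Omega : set 'rV[R]_n :=
  [set x | exists (k : nat) (lam : 'I_k -> R) (p : 'I_k -> 'rV[R]_n),
     (forall i, Omega (p i)) /\ \sum_(i < k) lam i = 1 /\
     x = \sum_(i < k) lam i *: p i].

Definition ri Omega : set 'rV[R]_n :=
  [set a | Omega a /\ exists delta : R, 0 < delta /\
     eball a delta `&` aff Omega `<=` Omega].

(* support function, sup of the empty set being -oo *)
Definition support_fun Omega (v : 'rV[R]_n) : \bar R :=
  ereal_sup [set (dotp v x)%:E | x in Omega].

Definition infconv (g h : 'rV[R]_n -> \bar R) (x : 'rV[R]_n) : \bar R :=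
  ereal_inf [set (g p.1 + h p.2)%E | p in [set p : 'rV[R]_n * 'rV[R]_n | p.1 + p.2 = x]].

End Defs.

From HB Require Import structures.
From mathcomp Require Import all_boot all_order all_algebra.
From mathcomp Require Import all_classical all_reals all_analysis.
From mathcomp Require Import ring lra.
Import Order.TTheory GRing.Theory Num.Theory.
Local Open Scope classical_set_scope.
Local Open Scope ring_scope.
Set Implicit Arguments. Unset Strict Implicit. Unset Printing Implicit Defensive.

(* Write Omega_i between a convex C_i and its closure.  The inequality
   sigma_(Omega1 /\ Omega2) <= sigma_Omega1 [] sigma_Omega2 is immediate.  For the
   converse, let sigma_(Omega1 /\ Omega2)(v) = al be finite; we split
   v = v1 + v2 with <v1,x> + <v2,y> <= al on Omega1 x Omega2, which gives both
   the infimal convolution formula and the exactness of the convolution.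

   The splitting comes from separating, in R^n x R, the convex cone generated
   by the points (x - y, <v,x> - al), x in C1, y in C2, and (0,-1) from the
   point (0,1).  The separating functional (w, g) has g > 0: if g = 0 then w
   would properly separate C1 from C2, which a common relative interior point
   rules out.  Dividing by g yields v1 = v + w/g and v2 = - w/g. *)

Section InnerProduct.
Variables (R : realType) (m : nat).
Implicit Types (u v w : 'rV[R]_m).

Lemma dotpDr u v w : dotp u (v + w) = dotp u v + dotp u w.
Proof. by rewrite /dotp -big_split; apply: eq_bigr => i _; rewrite mxE mulrDr. Qed.

Lemma dotpDl u v w : dotp (u + v) w = dotp u w + dotp v w.
Proof. by rewrite /dotp -big_split; apply: eq_bigr => i _; rewrite mxE mulrDl. Qed.

Lemma dotpZr (a : R) u v : dotp u (a *: v) = a * dotp u v.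
Proof. by rewrite /dotp mulr_sumr; apply: eq_bigr => i _; rewrite mxE mulrCA. Qed.

Lemma dotpZl (a : R) u v : dotp (a *: u) v = a * dotp u v.
Proof. by rewrite /dotp mulr_sumr; apply: eq_bigr => i _; rewrite mxE mulrA. Qed.

Lemma dotpC u v : dotp u v = dotp v u.
Proof. by apply: eq_bigr => i _; rewrite mulrC. Qed.

Lemma dotp0r u : dotp u 0 = 0.
Proof. by rewrite -(scale0r 0) dotpZr mul0r. Qed.

Lemma dotp0l u : dotp 0 u = 0.
Proof. by rewrite dotpC dotp0r. Qed.

Lemma dotpNr u v : dotp u (- v) = - dotp u v.
Proof. by rewrite -scaleN1r dotpZr mulN1r. Qed.

Lemma dotpNl u v : dotp (- u) v = - dotp u v.
Proof. by rewrite -scaleN1r dotpZl mulN1r. Qed.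

Lemma dotpBr u v w : dotp u (v - w) = dotp u v - dotp u w.
Proof. by rewrite dotpDr dotpNr. Qed.

Lemma dotp_ge0 u : 0 <= dotp u u.
Proof. by rewrite /dotp sumr_ge0 // => i _; rewrite -expr2 sqr_ge0. Qed.

Lemma dotp_delta u (i : 'I_m) : dotp u (delta_mx 0 i) = u 0 i.
Proof.
rewrite /dotp (bigD1 i) //= mxE !eqxx mulr1 big1 ?addr0 // => j /negbTE ji.
by rewrite mxE ji andbF mulr0.
Qed.

Lemma coord_le_norm u (i : 'I_m) : `|u 0 i| <= Num.sqrt (dotp u u).
Proof.
rewrite -sqrtr_sqr ler_sqrt ?dotp_ge0 // /dotp (bigD1 i) //= expr2 lerDl.
by rewrite sumr_ge0 // => j _; rewrite -expr2 sqr_ge0.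
Qed.

(* ... hence a Cauchy-Schwarz type bound, which is all the continuity of
   [dotp u] that the closure arguments need. *)
Lemma dotp_le_norm u v : dotp u v <= (\sum_i `|u 0 i|) * Num.sqrt (dotp v v).
Proof.
rewrite /dotp mulr_suml; apply: ler_sum => i _.
rewrite (le_trans (ler_norm _)) // normrM ler_wpM2l //; exact: coord_le_norm.
Qed.
End InnerProduct.

Definition is_subspace (R : realType) (m : nat) (E : set 'rV[R]_m) : Prop :=
  [/\ E 0, forall x y, E x -> E y -> E (x + y) & forall (a : R) x, E x -> E (a *: x)].

Section SubspaceClosure.
Variables (R : realType) (m : nat) (E : set 'rV[R]_m).
Hypothesis subE : is_subspace E.

Lemma subspaceD x y : E x -> E y -> E (x + y).
Proof. by case: subE => _ + _; apply. Qed.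

Lemma subspaceZ (a : R) x : E x -> E (a *: x).
Proof. by case: subE => _ _; apply. Qed.

Lemma subspaceB x y : E x -> E y -> E (x - y).
Proof. by move=> Ex Ey; rewrite -scaleN1r; apply: subspaceD => //; apply: subspaceZ. Qed.
End SubspaceClosure.

Section HahnBanach.
Variables (R : realType) (m : nat) (D : set 'rV[R]_m) (p : 'rV[R]_m -> R).
Hypothesis subD : is_subspace D.
Hypothesis pD : forall x y, D x -> D y -> p (x + y) <= p x + p y.
Hypothesis pZ : forall (a : R) x, 0 < a -> D x -> p (a *: x) = a * p x.

Lemma hb_step (E : set 'rV[R]_m) (w d : 'rV[R]_m) :
  is_subspace E -> E `<=` D -> D d -> (forall y, E y -> dotp w y <= p y) ->
  exists c, forall y s, E y -> dotp w y + s * c <= p (y + s *: d).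
Proof.
case: subD => D0 DD DZ [E0 ED EZ] sED Dd hw.
have DNd : D (- d) by rewrite -scaleN1r; exact: DZ.
have sep y y' : E y -> E y' -> dotp w y - p (y - d) <= p (y' + d) - dotp w y'.
  move=> Ey Ey'; rewrite lerBrDr addrAC lerBlDr -dotpDr.
  rewrite (le_trans (hw _ (ED _ _ Ey Ey'))) //.
  have -> : y + y' = (y' + d) + (y - d) by rewrite addrACA subrr addr0 addrC.
  by apply: pD; apply: DD; solve [exact: sED | exact: Dd | exact: DNd].
pose A := [set dotp w y - p (y - d) | y in E].
have Aub y' : E y' -> ubound A (p (y' + d) - dotp w y').
  by move=> Ey' _ [y Ey <-]; apply: sep.
have c_ge y : E y -> dotp w y - p (y - d) <= sup A.
  move=> Ey; apply: ub_le_sup; last by exists y.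
  by exists (p (0 + d) - dotp w 0); apply: Aub.
have c_le y : E y -> sup A <= p (y + d) - dotp w y.
  by move=> Ey; apply: ge_sup; [exists (dotp w 0 - p (0 - d)), 0|apply: Aub].
exists (sup A) => y s Ey.
have Ds t : D (t *: y + d) /\ D (t *: y - d).
  have Dy : D (t *: y) by apply: sED; apply: EZ.
  by split; apply: DD.
have [s0|s0|->] := ltgtP s 0; last by rewrite mul0r scale0r !addr0; apply: hw.
- have t0 : 0 < - s by rewrite oppr_gt0.
  have -> : y + s *: d = (- s) *: ((- s)^-1 *: y - d).
    by rewrite scalerBr scalerA mulfV ?gt_eqF // scale1r scaleNr opprK.
  rewrite pZ //; last by case: (Ds (- s)^-1).
  have := ler_wpM2l (ltW t0) (c_ge _ (EZ (- s)^-1 _ Ey)).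
  rewrite dotpZr mulrBr mulrA mulfV ?gt_eqF // mul1r; lra.
- have -> : y + s *: d = s *: (s^-1 *: y + d).
    by rewrite scalerDr scalerA mulfV ?gt_eqF // scale1r.
  rewrite pZ //; last by case: (Ds s^-1).
  have := ler_wpM2l (ltW s0) (c_le _ (EZ s^-1 _ Ey)).
  rewrite dotpZr mulrBr mulrA mulfV ?gt_eqF // mul1r; lra.
Qed.

(* Positive homogeneity forces [p 0 = 0]. *)
Lemma p0 : p 0 = 0.
Proof. by case: subD => D0 _ _; have := pZ (ltr0Sn R 1) D0; rewrite scaler0; lra. Qed.

Definition coord_part (j : nat) : set 'rV[R]_m :=
  [set z | D z /\ forall i : 'I_m, (j <= i)%N -> z 0 i = 0].

Lemma coord_part_subspace j : is_subspace (coord_part j).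
Proof.
case: subD => D0 DD DZ; split.
- by split => // i _; rewrite mxE.
- by move=> x y [Dx hx] [Dy hy]; split; [exact: DD|move=> i ji; rewrite mxE hx // hy // addr0].
- by move=> a x [Dx hx]; split; [exact: DZ|move=> i ji; rewrite mxE hx // mulr0].
Qed.

(* Extension one coordinate at a time: a functional dominated by [p] on
   [coord_part j] exists for every [j]. *)
Lemma hb_coord j : exists w, forall z, coord_part j z -> dotp w z <= p z.
Proof.
elim: j => [|j [w hw]].
  exists 0 => z [Dz hz]; rewrite dotp0l.
  have -> : z = 0 by apply/matrixP => i k; rewrite ord1 mxE; apply: hz.
  by rewrite p0.
have [[d [[Dd hd] [J [hJ dJ]]]]|nod] := pselect (exists d, coord_part j.+1 d /\
   exists J : 'I_m, nat_of_ord J = j /\ d 0 J != 0); last first.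
  exists w => z [Dz hz]; apply: hw; split => // i ji.
  have [ij|ij] := eqVneq (nat_of_ord i) j; last by apply: hz; rewrite ltn_neqAle eq_sym ij.
  by apply: contrapT => zi; apply: nod; exists z; split; [|exists i; split; [|apply/eqP]].
have sub : coord_part j `<=` D by move=> z [].
have [c hc] := hb_step (coord_part_subspace j) sub Dd hw.
pose th := (c - dotp w d) / d 0 J.
exists (w + th *: delta_mx 0 J) => z [Dz hz].
pose s := z 0 J / d 0 J.
have zJ : z 0 J = s * d 0 J by rewrite divfK.
have hy : coord_part j (z - s *: d).
  split; first by apply: subspaceB => //; apply: subspaceZ.
  move=> i ji; rewrite !mxE.
  have [->|iJ] := eqVneq i J; first by rewrite zJ subrr.
  have ji' : (j < i)%N by rewrite ltn_neqAle ji andbT -hJ; apply: contra iJ => /eqP/val_inj ->.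
  by rewrite hz // hd // mulr0 subr0.
have -> : dotp (w + th *: delta_mx 0 J) z = dotp w (z - s *: d) + s * c.
  rewrite dotpDl dotpZl [dotp (delta_mx _ _) _]dotpC dotp_delta dotpBr dotpZr.
  by rewrite zJ /th mulrCA divfK //; lra.
by have := hc _ s hy; rewrite subrK.
Qed.

Theorem hahn_banach : exists w, forall z, D z -> dotp w z <= p z.
Proof.
have [w hw] := hb_coord m; exists w => z Dz; apply: hw; split => // i mi.
by have := ltn_ord i; rewrite ltnNge mi.
Qed.
End HahnBanach.

Section ConeSeparation.
Variables (R : realType) (m : nat) (K : set 'rV[R]_m).
Hypothesis KD : forall x y, K x -> K y -> K (x + y).
Hypothesis KZ : forall (a : R) x, 0 < a -> K x -> K (a *: x).

Lemma cone_sum r (M : 'M[R]_(r, m)) (c : 'I_r -> R) x :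
  (forall i, K (row i M)) -> (forall i, 0 < c i) -> K x ->
  K (x + \sum_i c i *: row i M).
Proof.
move=> hM hc Kx; apply: (big_rec (fun y => K (x + y))); first by rewrite addr0.
by move=> i y _ Ky; rewrite addrCA; apply: KD => //; apply: KZ.
Qed.

(* Finitely many vectors of [K] span the linear hull of [K]: take a family of
   maximal rank. *)
Lemma cone_spanning_family :
  exists r (M : 'M[R]_(r, m)), (forall i, K (row i M)) /\ forall k, K k -> (k <= M)%MS.
Proof.
pose P j := `[< exists r (M : 'M[R]_(r, m)), (forall i, K (row i M)) /\ \rank M = j >].
have exP : exists j, P j.
  by exists 0%N; apply/asboolP; exists 0%N, 0; split; [case|rewrite mxrank0].
have ubP j : P j -> (j <= m)%N by move=> /asboolP [r [M [_ <-]]]; apply: rank_leq_col.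
case: (ex_maxnP exP ubP) => j /asboolP [r [M [hM rM]]] jmax.
exists r, M; split => // k Kk; apply/negPn/negP => nk.
have : P (\rank (col_mx M k)).
  apply/asboolP; exists (r + 1)%N, (col_mx M k); split => // i.
  rewrite -(fintype.splitK i); case: (fintype.split i) => [a|b] /=; first by rewrite rowKu.
  by rewrite rowKd (_ : row b k = k) //; apply/matrixP => a c; rewrite !mxE !ord1.
move/jmax; apply/negP; rewrite -ltnNge -rM.
rewrite -(eqmx_rank (introT eqmxP (addsmxE M k))).
have [le eqC] := mxrank_leqif_sup (addsmxSl M k).
by rewrite ltn_neqAle le andbT eqC addsmx_sub submx_refl /= nk.
Qed.

Lemma cone_core k0 : K k0 -> exists e, K e /\
  forall k, K k -> exists t, 0 < t /\ K (t *: e - k).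
Proof.
move=> Kk0; have [r [M [hM span]]] := cone_spanning_family.
exists (k0 + \sum_i 1 *: row i M); split; first by apply: cone_sum => // i; apply: ltr01.
move=> k Kk; have /submxP [u ->] := span k Kk.
pose t := 1 + \sum_i `|u 0 i|.
have t0 : 0 < t by rewrite ltr_pwDl // sumr_ge0.
have ut i : 0 < t - u 0 i.
  rewrite subr_gt0 /t; apply: (le_lt_trans (ler_norm _)).
  by rewrite ltr_pwDl // (bigD1 i) //= lerDl sumr_ge0.
exists t; split => //.
have -> : t *: (k0 + \sum_i 1 *: row i M) - u *m M =
   t *: k0 + \sum_i (t - u 0 i) *: row i M.
  rewrite mulmx_sum_row scalerDr scaler_sumr -addrA -sumrB; congr (_ + _).
  by apply: eq_bigr => i _; rewrite scale1r scalerBl.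
by apply: cone_sum => //; apply: KZ.
Qed.

Section Gauge.
Variable e : 'rV[R]_m.
Hypothesis Ke : K e.
Hypothesis e_absorbing : forall k, K k -> exists t, 0 < t /\ K (t *: e - k).
Hypothesis Kne : ~ K (- e).

Definition gauge_set (z : 'rV[R]_m) : set R := [set t | K (t *: e - z)].
Definition gauge_dom : set 'rV[R]_m :=
  [set z | (exists t, K (t *: e - z)) /\ (exists t, K (t *: e + z))].
Definition gauge (z : 'rV[R]_m) : R := inf (gauge_set z).

(* Since [- e] is not in [K], no negative multiple of [e] is. *)
Lemma cone_scale_e_ge0 (u : R) : K (u *: e) -> 0 <= u.
Proof.
move=> Ku; rewrite leNgt; apply/negP => u0; apply: Kne.
have -> : - e = (- u)^-1 *: (u *: e) by rewrite scalerA invrN mulNr mulVf ?lt_eqF // scaleN1r.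
by apply: KZ => //; rewrite invr_gt0 oppr_gt0.
Qed.

(* On [gauge_dom] the gauge is a genuine infimum of a set bounded below. *)
Lemma gauge_set_lbound z t2 : K (t2 *: e + z) -> lbound (gauge_set z) (- t2).
Proof.
move=> K2 t Kt; rewrite -subr_ge0 opprK; apply: cone_scale_e_ge0.
have -> : (t + t2) *: e = (t *: e - z) + (t2 *: e + z).
  by rewrite addrACA addNr addr0 scalerDl.
exact: KD.
Qed.

Lemma gauge_le z t : gauge_dom z -> gauge_set z t -> gauge z <= t.
Proof. by move=> [_ [t2 K2]] Tt; apply: ge_inf => //; exists (- t2); apply: gauge_set_lbound. Qed.

Lemma gauge_ge z x : gauge_dom z -> lbound (gauge_set z) x -> x <= gauge z.
Proof. by move=> [[t1 K1] _] h; apply: lb_le_inf => //; exists t1. Qed.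

Lemma gauge_dom_subspace : is_subspace gauge_dom.
Proof.
split.
- by split; exists 1; rewrite scale1r ?subr0 ?addr0.
- move=> x y [[a1 h1] [a2 h2]] [[b1 g1] [b2 g2]]; split.
    by exists (a1 + b1); rewrite scalerDl opprD addrACA; exact: KD.
  by exists (a2 + b2); rewrite scalerDl addrACA; exact: KD.
- move=> a x [[a1 h1] [a2 h2]].
  have [a0|a0|->] := ltgtP a 0; last by split; exists 1; rewrite scale0r scale1r ?subr0 ?addr0.
  + split; [exists ((- a) * a2)|exists ((- a) * a1)].
      have -> : ((- a) * a2) *: e - a *: x = (- a) *: (a2 *: e + x).
        by rewrite scalerDr scalerA scaleNr.
      by apply: KZ; rewrite ?oppr_gt0.
    have -> : ((- a) * a1) *: e + a *: x = (- a) *: (a1 *: e - x).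
      by rewrite scalerBr scalerA scaleNr opprK.
    by apply: KZ; rewrite ?oppr_gt0.
  + split; [exists (a * a1)|exists (a * a2)];
      by rewrite -scalerA -?scalerBr -?scalerDr; exact: KZ.
Qed.

Lemma gauge_subadd x y : gauge_dom x -> gauge_dom y -> gauge (x + y) <= gauge x + gauge y.
Proof.
move=> Dx Dy; have Dxy := subspaceD gauge_dom_subspace Dx Dy.
have h1 t1 t2 : gauge_set x t1 -> gauge_set y t2 -> gauge (x + y) - t1 <= t2.
  move=> T1 T2; rewrite lerBlDl; apply: gauge_le => //.
  by rewrite /gauge_set /= scalerDl opprD addrACA; apply: KD.
have h2 t1 : gauge_set x t1 -> gauge (x + y) - gauge y <= t1.
  by move=> T1; rewrite lerBlDr -lerBlDl; apply: gauge_ge => // t2; apply: h1.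
by rewrite -lerBlDr; apply: gauge_ge => // t1; apply: h2.
Qed.

Lemma gauge_homog (a : R) x : 0 < a -> gauge_dom x -> gauge (a *: x) = a * gauge x.
Proof.
move=> a0 Dx; have Dax := subspaceZ gauge_dom_subspace a Dx.
apply/eqP; rewrite eq_le; apply/andP; split.
  rewrite -ler_pdivrMl //; apply: gauge_ge => // t Tt.
  rewrite ler_pdivrMl //; apply: gauge_le => //.
  by rewrite /gauge_set /= -scalerA -scalerBr; apply: KZ.
apply: gauge_ge => // t Tt; rewrite -ler_pdivlMl //; apply: gauge_le => //; rewrite /gauge_set /=.
have -> : (a^-1 * t) *: e - x = a^-1 *: (t *: e - a *: x).
  by rewrite scalerBr !scalerA mulVf ?gt_eqF // scale1r.
by apply: KZ => //; rewrite invr_gt0.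
Qed.

Lemma cone_sub_gauge_dom : K `<=` gauge_dom.
Proof.
move=> k Kk; split; first by have [t [_ ?]] := e_absorbing Kk; exists t.
by exists 1; rewrite scale1r; apply: KD.
Qed.

Lemma cone_opp_gauge_dom k : K k -> gauge_dom (- k).
Proof.
by move=> Kk; rewrite -scaleN1r; apply: (subspaceZ gauge_dom_subspace); apply: cone_sub_gauge_dom.
Qed.

Lemma gauge_opp_cone k : K k -> gauge (- k) <= 0.
Proof.
move=> Kk; have Dk := cone_opp_gauge_dom Kk; rewrite leNgt; apply/negP => q0.
have : gauge (- k) <= gauge (- k) / 2.
  apply: gauge_le => //; rewrite /gauge_set /= opprK.
  by apply: KD => //; apply: KZ => //; rewrite divr_gt0.
lra.
Qed.

Lemma gauge_opp_e : gauge (- e) < 0.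
Proof.
have De := cone_opp_gauge_dom Ke; apply: (@le_lt_trans _ _ (- (1/2))); last by lra.
apply: gauge_le => //; rewrite /gauge_set /= opprK.
rewrite (_ : - (1/2) *: e + e = (1/2) *: e); first by apply: KZ => //; lra.
by rewrite -[X in _ + X]scale1r -scalerDl; congr (_ *: _); lra.
Qed.

(* Hahn-Banach applied to the gauge gives a functional below it. *)
Lemma gauge_separation : exists w, (forall k, K k -> dotp w k <= 0) /\ dotp w e < 0.
Proof.
have [f hf] := hahn_banach gauge_dom_subspace gauge_subadd gauge_homog.
exists (- f); split => [k Kk|]; rewrite dotpNl -dotpNr.
  exact: le_trans (hf _ (cone_opp_gauge_dom Kk)) (gauge_opp_cone Kk).
exact: le_lt_trans (hf _ (cone_opp_gauge_dom Ke)) gauge_opp_e.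
Qed.
End Gauge.

Theorem cone_separation k0 : K k0 -> ~ K (- k0) ->
  exists w, (forall k, K k -> dotp w k <= 0) /\ exists k1, K k1 /\ dotp w k1 < 0.
Proof.
move=> Kk0 nKk0; have [e [Ke e_abs]] := cone_core Kk0.
have Kne : ~ K (- e).
  move=> Kne; apply: nKk0; have [t [t0 Kt]] := e_abs _ Kk0.
  have -> : - k0 = (t *: e - k0) + t *: (- e) by rewrite scalerN addrAC subrr add0r.
  by apply: KD => //; apply: KZ.
have [w [hw we]] := gauge_separation Ke e_abs Kne.
by exists w; split => //; exists e.
Qed.
End ConeSeparation.

Section ClosureAndRelativeInterior.
Variables (R : realType) (n : nat).
Implicit Types (C Om : set 'rV[R]_n) (u w x : 'rV[R]_n).

Lemma ri_mem Om a : ri Om a -> Om a.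
Proof. by case. Qed.

Lemma closure_le C u (b : R) : (forall c, C c -> dotp u c <= b) ->
  forall x, eclosure C x -> dotp u x <= b.
Proof.
move=> hC x hx; rewrite leNgt; apply/negP => bx.
pose S := \sum_i `|u 0 i|.
have S0 : 0 <= S by rewrite sumr_ge0.
pose eps := (dotp u x - b) / (S + 1).
have eps0 : 0 < eps by rewrite divr_gt0 ?subr_gt0 // ltr_pwDr.
have epsE : S * eps + eps = dotp u x - b.
  by rewrite -[X in _ + X]mul1r -mulrDl mulrC /eps divfK // gt_eqF // ltr_pwDr.
have [c [Cc hc]] := hx eps eps0.
have h1 := dotp_le_norm u (x - c).
have cx : dotp (x - c) (x - c) = dotp (c - x) (c - x).
  by rewrite -opprB dotpNl dotpNr opprK.
have h2 : S * Num.sqrt (dotp (c - x) (c - x)) <= S * eps by rewrite ler_wpM2l // ltW.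
have := hC c Cc; rewrite dotpBr -/S cx in h1; lra.
Qed.

Lemma closure_le2 C1 C2 Om1 Om2 u1 u2 (b : R) :
  Om1 `<=` eclosure C1 -> Om2 `<=` eclosure C2 ->
  (forall x y, C1 x -> C2 y -> dotp u1 x + dotp u2 y <= b) ->
  forall x y, Om1 x -> Om2 y -> dotp u1 x + dotp u2 y <= b.
Proof.
move=> c1 c2 hC x y Ox Oy; rewrite addrC -lerBrDr.
apply: (closure_le _ (c2 _ Oy)) => y' Cy'; rewrite lerBrDr addrC -lerBrDr.
by apply: (closure_le _ (c1 _ Ox)) => x' Cx'; rewrite lerBrDr; apply: hC.
Qed.

Lemma ri_max Om a w : ri Om a -> (forall x, Om x -> dotp w x <= dotp w a) ->
  forall x, Om x -> dotp w x = dotp w a.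
Proof.
move=> [Oa [del [del0 hdel]]] hmax x Ox; apply/eqP; rewrite eq_le hmax //=.
pose d := a - x.
pose s := Num.sqrt (dotp d d).
have s0 : 0 <= s by apply: sqrtr_ge0.
pose e := del / (s + 1).
have e0 : 0 < e by rewrite divr_gt0 // ltr_pwDr.
have es : e * s < del.
  by rewrite /e mulrAC ltr_pdivrMr ?ltr_pwDr // mulrDr mulr1 ltr_pwDr.
have Op : Om (a + e *: d).
  apply: hdel; split.
    rewrite /eball /= addrC addKr dotpZl dotpZr mulrA -expr2 sqrtrM ?sqr_ge0 //.
    by rewrite sqrtr_sqr ger0_norm ?ltW.
  exists 2%N, (fun i : 'I_2 => if i == ord0 then 1 + e else - e),
              (fun i : 'I_2 => if i == ord0 then a else x).
  split; first by move=> i; case: ifP.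
  rewrite !big_ord_recl !big_ord0 /= !addr0 addrK; split => //.
  by rewrite /d scalerBr scalerDl scale1r scaleNr addrA.
have := hmax _ Op; rewrite dotpDr dotpZr -lerBrDl subrr pmulr_rle0 //.
by rewrite /d dotpBr subr_le0.
Qed.
End ClosureAndRelativeInterior.

Section Lift.
Variables (R : realType) (n : nat).

(* [R^n x R] realized as row vectors of size [n + 1]. *)
Definition emb (z : 'rV[R]_n) (t : R) : 'rV[R]_(n + 1) := row_mx z (\row_(i < 1) t).

Lemma dotp_emb (W : 'rV[R]_(n + 1)) z t :
  dotp W (emb z t) = dotp (lsubmx W) z + rsubmx W 0 0 * t.
Proof.
rewrite -{1}(hsubmxK W) /emb /dotp big_split_ord /= big_ord1 !row_mxEr mxE.
by congr (_ + _); apply: eq_bigr => i _; rewrite !row_mxEl.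
Qed.

Lemma emb_add z1 t1 z2 t2 : emb z1 t1 + emb z2 t2 = emb (z1 + z2) (t1 + t2).
Proof. by rewrite /emb add_row_mx; congr row_mx; apply/matrixP => i j; rewrite !mxE. Qed.

Lemma emb_scale (a : R) z t : a *: emb z t = emb (a *: z) (a * t).
Proof. by rewrite /emb scale_row_mx; congr row_mx; apply/matrixP => i j; rewrite !mxE. Qed.

Lemma emb_opp z t : - emb z t = emb (- z) (- t).
Proof. by rewrite /emb opp_row_mx; congr row_mx; apply/matrixP => i j; rewrite !mxE. Qed.

Lemma emb_inj z1 t1 z2 t2 : emb z1 t1 = emb z2 t2 -> z1 = z2 /\ t1 = t2.
Proof.
move/eq_row_mx => [-> h]; split => //.
by have := congr1 (fun M : 'rV[R]_1 => M 0 0) h; rewrite !mxE.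
Qed.
End Lift.

Section LiftedCone.
Variables (R : realType) (n : nat) (C1 C2 : set 'rV[R]_n) (v : 'rV[R]_n) (al : R).
Hypotheses (cv1 : convex_set_def C1) (cv2 : convex_set_def C2).
Hypothesis v_le : forall x, C1 x -> C2 x -> dotp v x <= al.

Definition lifted_cone : set 'rV[R]_(n + 1) :=
  [set k | exists (l r : R) x y, [/\ 0 <= l, 0 <= r, C1 x, C2 y &
     k = emb (l *: (x - y)) (l * (dotp v x - al) - r)]].

Lemma lifted_cone_add k1 k2 : lifted_cone k1 -> lifted_cone k2 -> lifted_cone (k1 + k2).
Proof.
move=> [l1 [r1 [x1 [y1 [l10 r10 Cx1 Cy1 ->]]]]] [l2 [r2 [x2 [y2 [l20 r20 Cx2 Cy2 ->]]]]].
rewrite emb_add; have r0 : 0 <= r1 + r2 by apply: addr_ge0.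
have [L0|L0] := eqVneq (l1 + l2) 0.
  have [-> ->] : l1 = 0 /\ l2 = 0 by split; lra.
  exists 0, (r1 + r2), x1, y1; split => //.
  by rewrite !scale0r !mul0r addr0 !sub0r opprD.
have Lp : 0 < l1 + l2 by rewrite lt_neqAle eq_sym L0 addr_ge0.
have [t tE] : exists t, t = l1 / (l1 + l2) by eexists.
have t01 : 0 <= t <= 1 by rewrite tE divr_ge0 ?addr_ge0 //= ler_pdivrMr // mul1r lerDl.
have l1E : l1 = (l1 + l2) * t by rewrite tE mulrC divfK.
have l2E : l2 = (l1 + l2) * (1 - t) by rewrite mulrBr mulr1 -l1E; lra.
exists (l1 + l2), (r1 + r2), (t *: x1 + (1 - t) *: x2), (t *: y1 + (1 - t) *: y2).
split; [exact: ltW|by []|exact: cv1|exact: cv2|congr emb].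
  have -> : t *: x1 + (1 - t) *: x2 - (t *: y1 + (1 - t) *: y2) =
      t *: (x1 - y1) + (1 - t) *: (x2 - y2).
    by apply/matrixP => i j; rewrite !mxE; ring.
  by rewrite [in RHS]scalerDr !scalerA -l1E -l2E.
rewrite dotpDr !dotpZr.
have -> : (l1 + l2) * (t * dotp v x1 + (1 - t) * dotp v x2 - al) =
    l1 * dotp v x1 + l2 * dotp v x2 - (l1 + l2) * al.
  by rewrite mulrBr mulrDr !mulrA -l1E -l2E.
ring.
Qed.

Lemma lifted_cone_scale (c : R) k : 0 < c -> lifted_cone k -> lifted_cone (c *: k).
Proof.
move=> c0 [l [r [x [y [l0 r0 Cx Cy ->]]]]].
have c0' := ltW c0.
exists (c * l), (c * r), x, y; split; [exact: mulr_ge0|exact: mulr_ge0|by []|by []|].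
by rewrite emb_scale scalerA; congr emb; ring.
Qed.

Lemma lifted_cone_down x0 y0 : C1 x0 -> C2 y0 -> lifted_cone (emb 0 (-1)).
Proof. by move=> Cx0 Cy0; exists 0, 1, x0, y0; split; rewrite ?scale0r ?mul0r ?sub0r. Qed.

(* Since <v,.> <= al on C1 /\ C2, the upward direction (0, 1) is not in the cone. *)
Lemma lifted_cone_not_up : ~ lifted_cone (emb 0 1).
Proof.
move=> [l [r [x [y [l0 r0 Cx Cy /emb_inj [h1 h2]]]]]].
have [lz|lnz] := eqVneq l 0; first by move: h2; rewrite lz mul0r; lra.
move: h1 => /esym/eqP; rewrite scaler_eq0 (negbTE lnz) /= subr_eq0 => /eqP xy.
move: Cy; rewrite -xy => /(v_le Cx) vx; move: h2; nra.
Qed.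

Lemma lifted_separation x0 y0 : C1 x0 -> C2 y0 ->
  exists w (g : R), [/\ 0 <= g,
    forall x y, C1 x -> C2 y -> dotp w (x - y) + g * (dotp v x - al) <= 0 &
    g = 0 -> exists x y, [/\ C1 x, C2 y & dotp w x < dotp w y]].
Proof.
move=> Cx0 Cy0; have Kdown := lifted_cone_down Cx0 Cy0.
have Knup : ~ lifted_cone (- emb 0 (-1)) by rewrite emb_opp oppr0 opprK; exact: lifted_cone_not_up.
have [W [hW [k1 [Kk1 hk1]]]] := cone_separation lifted_cone_add lifted_cone_scale Kdown Knup.
exists (lsubmx W), (rsubmx W 0 0); split.
- by have := hW _ Kdown; rewrite dotp_emb dotp0r add0r; lra.
- move=> x y Cx Cy; have := hW (emb (x - y) (dotp v x - al)).
  by rewrite dotp_emb; apply; exists 1, 0, x, y; split; rewrite ?scale1r ?mul1r ?subr0.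
- move=> g0; move: Kk1 hk1 => [l [r [x [y [l0 r0 Cx Cy ->]]]]].
  rewrite dotp_emb g0 mul0r addr0 dotpZr dotpBr => neg.
  by exists x, y; split => //; nra.
Qed.
End LiftedCone.

Section Decomposition.
Variables (R : realType) (n : nat) (Om1 Om2 C1 C2 : set 'rV[R]_n) (a v : 'rV[R]_n) (al : R).
Hypotheses (cv1 : convex_set_def C1) (cv2 : convex_set_def C2).
Hypotheses (s1 : C1 `<=` Om1) (s2 : C2 `<=` Om2).
Hypotheses (c1 : Om1 `<=` eclosure C1) (c2 : Om2 `<=` eclosure C2).
Hypotheses (r1 : ri Om1 a) (r2 : ri Om2 a).

(* A common relative interior point forbids proper separation of [C1] and [C2]:
   a functional below on [C1] and above on [C2] is constant on both. *)
Lemma ri_no_proper_separation w :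
  (forall x y, C1 x -> C2 y -> dotp w x <= dotp w y) ->
  forall x y, C1 x -> C2 y -> dotp w x = dotp w y.
Proof.
move=> hC x y Cx Cy.
have hO : forall x y, Om1 x -> Om2 y -> dotp w x + dotp (- w) y <= 0.
  by apply: closure_le2 c1 c2 _ => x' y' Cx' Cy'; rewrite dotpNl subr_le0; apply: hC.
have e1 : forall x, Om1 x -> dotp w x = dotp w a.
  by apply: (@ri_max _ _ Om1 a w r1) => x' Ox'; have := hO x' a Ox' (ri_mem r2); rewrite dotpNl subr_le0.
have e2 : forall y, Om2 y -> dotp (- w) y = dotp (- w) a.
  by apply: (@ri_max _ _ Om2 a (- w) r2) => y' Oy'; have := hO a y' (ri_mem r1) Oy'; rewrite !dotpNl; lra.
by rewrite (e1 _ (s1 Cx)); apply: oppr_inj; rewrite -!dotpNl (e2 _ (s2 Cy)).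
Qed.

Hypothesis v_le : forall x, Om1 x -> Om2 x -> dotp v x <= al.

Theorem bound_decomposition : exists v1 v2, v = v1 + v2 /\
  forall x y, Om1 x -> Om2 y -> dotp v1 x + dotp v2 y <= al.
Proof.
have [x0 [Cx0 _]] := c1 (ri_mem r1) ltr01.
have [y0 [Cy0 _]] := c2 (ri_mem r2) ltr01.
have v_leC x : C1 x -> C2 x -> dotp v x <= al.
  by move=> Cx1 Cx2; apply: v_le; [exact: s1|exact: s2].
have [w [g [g0 hsep hdeg]]] := lifted_separation cv1 cv2 v_leC Cx0 Cy0.
have gp : 0 < g.
  rewrite lt_neqAle g0 andbT eq_sym; apply/eqP => gz.
  have [x [y [Cx Cy]]] := hdeg gz.
  rewrite (ri_no_proper_separation _ Cx Cy) ?ltxx // => x' y' Cx' Cy'.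
  by have := hsep x' y' Cx' Cy'; rewrite gz mul0r addr0 dotpBr subr_le0.
exists (v + g^-1 *: w), (- (g^-1 *: w)); split; first by rewrite addrK.
apply: closure_le2 c1 c2 _ => x y Cx Cy.
have : g^-1 * (dotp w x - dotp w y) <= al - dotp v x.
  by rewrite ler_pdivrMl //; have := hsep x y Cx Cy; rewrite dotpBr; lra.
by rewrite dotpDl dotpNl !dotpZl; lra.
Qed.
End Decomposition.

Section SupportFunction.
Variables (R : realType) (n : nat).
Implicit Types (Om : set 'rV[R]_n) (u x : 'rV[R]_n).
Local Open Scope ereal_scope.

Lemma support_fun_ge Om u x : Om x -> (dotp u x)%:E <= support_fun Om u.
Proof. by move=> Ox; apply: ereal_sup_ubound; exists x. Qed.

Lemma support_inter_le Om1 Om2 (v1 v2 : 'rV[R]_n) :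
  support_fun (Om1 `&` Om2) (v1 + v2) <= support_fun Om1 v1 + support_fun Om2 v2.
Proof.
apply: ge_ereal_sup => _ [x [Ox1 Ox2] <-].
by rewrite dotpDl EFinD; apply: leeD; apply: support_fun_ge.
Qed.

Lemma support_sum_le Om1 Om2 (a v1 v2 : 'rV[R]_n) (al : R) : Om1 a -> Om2 a ->
  (forall x y, Om1 x -> Om2 y -> (dotp v1 x + dotp v2 y <= al)%R) ->
  support_fun Om1 v1 + support_fun Om2 v2 <= al%:E.
Proof.
move=> O1 O2 h.
have ub1 y : Om2 y -> support_fun Om1 v1 <= (al - dotp v2 y)%:E.
  by move=> Oy; apply: ge_ereal_sup => _ [x Ox <-]; rewrite lee_fin lerBrDr; apply: h.
have [s s1E] : exists s, support_fun Om1 v1 = s%:E.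
  move: (ub1 _ O2) (support_fun_ge v1 O1).
  by case: (support_fun Om1 v1) => [r||] // _ _; exists r.
have ub2 : support_fun Om2 v2 <= (al - s)%:E.
  apply: ge_ereal_sup => _ [y Oy <-]; rewrite lee_fin lerBrDl -lerBrDr.
  by rewrite -lee_fin -s1E; apply: ub1.
rewrite s1E; apply: le_trans (leeD (lexx _) ub2) _.
by rewrite -EFinD addrC subrK.
Qed.
End SupportFunction.

Section Intersection.
Variables (R : realType) (n : nat) (Omega1 Omega2 : set 'rV[R]_n) (a : 'rV[R]_n).
Hypotheses (nc1 : nearly_convex Omega1) (nc2 : nearly_convex Omega2).
Hypotheses (r1 : ri Omega1 a) (r2 : ri Omega2 a).

Lemma support_inter_split v (al : R) : support_fun (Omega1 `&` Omega2) v = al%:E ->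
  exists v1 v2, v = v1 + v2 /\
    (support_fun Omega1 v1 + support_fun Omega2 v2 <= al%:E)%E.
Proof.
move: nc1 nc2 => [C1 [cv1 [s1 c1]]] [C2 [cv2 [s2 c2]]] hal.
have v_le x : Omega1 x -> Omega2 x -> dotp v x <= al.
  by move=> Ox1 Ox2; rewrite -lee_fin -hal; apply: support_fun_ge.
have [v1 [v2 [vE h]]] := bound_decomposition cv1 cv2 s1 s2 c1 c2 r1 r2 v_le.
by exists v1, v2; split => //; apply: support_sum_le (ri_mem r1) (ri_mem r2) h.
Qed.
End Intersection.

Theorem theorem6p1 (R : realType) (n : nat) (Omega1 Omega2 : set 'rV[R]_n) :
  nearly_convex Omega1 -> nearly_convex Omega2 ->
  ri Omega1 `&` ri Omega2 !=set0 ->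
  (support_fun (Omega1 `&` Omega2) = infconv (support_fun Omega1) (support_fun Omega2)) /\
  (forall v : 'rV[R]_n, support_fun (Omega1 `&` Omega2) v \is a fin_num ->
     exists v1 v2 : 'rV[R]_n, v = v1 + v2 /\
       support_fun (Omega1 `&` Omega2) v =
         (support_fun Omega1 v1 + support_fun Omega2 v2)%E).
Proof.
move=> nc1 nc2 [a [r1 r2]].
have split_le := support_inter_split nc1 nc2 r1 r2.
have Oa : (Omega1 `&` Omega2) a by split; exact: ri_mem.
split.
  apply/funext => v; apply/eqP; rewrite eq_le; apply/andP; split.
    apply: le_ereal_inf_tmp => _ [[v1 v2] /= <- <-]; exact: support_inter_le.
  have := support_fun_ge v Oa.
  case E : (support_fun _ v) => [al||] // _; last by rewrite leey.
  have [v1 [v2 [vE h]]] := split_le v al E.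
  by apply: ge_ereal_inf; exists (support_fun Omega1 v1 + support_fun Omega2 v2)%E => //; exists (v1, v2).
move=> v /fineK E; have [v1 [v2 [vE h]]] := split_le v _ (esym E).
exists v1, v2; split => //; apply: le_anti; rewrite -E h andbT E vE.
exact: support_inter_le.
Qed.
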